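(* Let $z_1,z_2\in\mathbb{C}$ with $\mathrm{Im}(z_i)>0$ and $|z_i|\ge 80(2\pi)^2$, and set $L_i^2=\frac{|z_i|^2}{2\mathrm{Im}(z_i)}$, $A_i^2=\frac{|z_i|^2}{2\mathrm{Re}(z_i)}$. Suppose $$\left|\frac{2\pi}{L_1^2}-\frac{2\pi}{L_2^2}\right|\le16(2\pi)^3\left(\frac{1}{L_1^4}+\frac{1}{L_2^4}\right),\qquad \left|\frac{2\pi}{A_1^2}-\frac{2\pi}{A_2^2}\right|\le20(2\pi)^3\left(\frac{1}{L_1^4}+\frac{1}{L_2^4}\right).$$ Then $|z_1-z_2|<560(2\pi)^2\frac{\mathrm{Im}(z_1)}{|z_1|}$.
   Context: Here $\frac{2\pi}{A_i^2}$ is understood as $\frac{4\pi\,\mathrm{Re}(z_i)}{|z_i|^2}$ (so it is defined also when $\mathrm{Re}(z_i)=0$). *)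

From Stdlib Require Import Reals.
Open Scope R_scope.

Definition Cpx : Type := (R * R)%type.
Definition Re (z : Cpx) : R := fst z.
Definition Im (z : Cpx) : R := snd z.

Definition Cnorm2 (z : Cpx) : R := Re z ^ 2 + Im z ^ 2.
Definition Cnorm (z : Cpx) : R := sqrt (Cnorm2 z).
Definition Csub (z w : Cpx) : Cpx := (Re z - Re w, Im z - Im w).

Definition Lsq (z : Cpx) : R := Cnorm2 z / (2 * Im z).
(* 2 pi / A^2, understood as 4 pi Re z / |z|^2 (defined also when Re z = 0) *)
Definition twopi_over_Asq (z : Cpx) : R := 4 * PI * Re z / Cnorm2 z.

(* Pass to the inverted points w_i = z_i / |z_i|^2 (the complex conjugates of 1/z_i).
   There 2 pi / L_i^2 = 4 pi Im w_i and 2 pi / A_i^2 = 4 pi Re w_i, so the two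
   hypotheses bound |Im w_1 - Im w_2| and |Re w_1 - Re w_2| by multiples of
   (2 pi)^2 (Im w_1^2 + Im w_2^2), while |z_i| >= 80 (2 pi)^2 makes Im w_i small
   enough that Im w_1 and Im w_2 are within a factor 7/3 of each other.  Hence
   |w_1 - w_2| is at most a constant times (2 pi)^2 Im w_1 Im w_2, and the
   identity |z_1 - z_2| = |z_1| |z_2| |w_1 - w_2| transports this back. *)
From Stdlib Require Import Reals Lra Psatz.
Open Scope R_scope.

Definition inversion (z : Cpx) : Cpx := (Re z / Cnorm2 z, Im z / Cnorm2 z).

Lemma Cnorm2_pos_of_Im (z : Cpx) : 0 < Im z -> 0 < Cnorm2 z.
Proof. unfold Cnorm2; nra. Qed.

Lemma Cnorm_sqr (z : Cpx) : Cnorm z * Cnorm z = Cnorm2 z.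
Proof. apply sqrt_sqrt; unfold Cnorm2; nra. Qed.

Lemma Cnorm_sub_inversion (z1 z2 : Cpx) : 0 < Cnorm2 z1 -> 0 < Cnorm2 z2 ->
  Cnorm (Csub z1 z2) = Cnorm z1 * Cnorm z2 * Cnorm (Csub (inversion z1) (inversion z2)).
Proof.
  destruct z1 as [x1 y1], z2 as [x2 y2]; unfold inversion, Cnorm, Cnorm2, Csub, Re, Im.
  cbv [fst snd]; intros hN1 hN2.
  rewrite <- !sqrt_mult_alt by nra.
  f_equal; field; lra.
Qed.

Lemma Cnorm_pos (z : Cpx) : 0 < Cnorm2 z -> 0 < Cnorm z.
Proof. apply sqrt_lt_R0. Qed.

Lemma Im_le_Cnorm (z : Cpx) : Im z <= Cnorm z.
Proof.
  pose proof (Cnorm_sqr z) as e; pose proof (sqrt_pos (Cnorm2 z)).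
  unfold Cnorm2 in e; fold (Cnorm z) in *; nra.
Qed.

Lemma Im_inversion_pos (z : Cpx) : 0 < Im z -> 0 < Im (inversion z).
Proof. intros hy; apply Rdiv_lt_0_compat, Cnorm2_pos_of_Im; assumption. Qed.

Lemma Im_div_Cnorm (z : Cpx) : 0 < Cnorm2 z ->
  Im z / Cnorm z = Cnorm z * Im (inversion z).
Proof.
  intros hN; pose proof (Cnorm_pos z hN).
  unfold inversion, Im at 2; cbv [snd]; rewrite <- Cnorm_sqr; field; lra.
Qed.

Lemma Cnorm_mul_Im_inversion_le (z : Cpx) : 0 < Cnorm2 z ->
  Cnorm z * Im (inversion z) <= 1.
Proof.
  intros hN; pose proof (Cnorm_pos z hN); pose proof (Im_le_Cnorm z).
  rewrite <- Im_div_Cnorm by assumption.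
  apply (Rmult_le_reg_r (Cnorm z)); [assumption|].
  unfold Rdiv; rewrite Rmult_assoc, Rinv_l, Rmult_1_r, Rmult_1_l by lra; assumption.
Qed.

Lemma twopi_over_Lsq_inversion (z : Cpx) : 0 < Im z ->
  2 * PI / Lsq z = 4 * PI * Im (inversion z).
Proof.
  intros hy; pose proof (Cnorm2_pos_of_Im z hy) as hN.
  unfold Lsq, inversion, Im at 2; cbv [snd]; field; lra.
Qed.

Lemma inv_Lsq_sqr (z : Cpx) : 0 < Im z -> 1 / Lsq z ^ 2 = 4 * Im (inversion z) ^ 2.
Proof.
  intros hy; pose proof (Cnorm2_pos_of_Im z hy) as hN.
  unfold Lsq, inversion, Im at 2; cbv [snd]; field; lra.
Qed.

Lemma twopi_over_Asq_inversion (z : Cpx) : twopi_over_Asq z = 4 * PI * Re (inversion z).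
Proof. unfold twopi_over_Asq, inversion, Re at 2, Rdiv; cbv [fst]; ring. Qed.

Lemma Cnorm_le_abs_Re_Im (z : Cpx) : Cnorm z <= Rabs (Re z) + Rabs (Im z).
Proof.
  pose proof (Rabs_pos (Re z)); pose proof (Rabs_pos (Im z)).
  rewrite <- (sqrt_pow2 (Rabs (Re z) + Rabs (Im z))) by lra.
  apply sqrt_le_1_alt; unfold Cnorm2; rewrite <- (pow2_abs (Re z)), <- (pow2_abs (Im z)); nra.
Qed.

Lemma Rabs_scaled_sub_le (k u v s : R) : 0 < k ->
  Rabs (k * u - k * v) <= k * s -> Rabs (u - v) <= s.
Proof.
  intros hk; rewrite <- Rmult_minus_distr_l, Rabs_mult, (Rabs_pos_eq k) by lra.
  apply Rmult_le_reg_l; exact hk.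
Qed.

Lemma Im_inversion_close (k : R) (z1 z2 : Cpx) : 0 < Im z1 -> 0 < Im z2 ->
  Rabs (2 * PI / Lsq z1 - 2 * PI / Lsq z2)
    <= k * (2 * PI) ^ 3 * (1 / Lsq z1 ^ 2 + 1 / Lsq z2 ^ 2) ->
  Rabs (Im (inversion z1) - Im (inversion z2))
    <= 2 * k * (2 * PI) ^ 2 * (Im (inversion z1) ^ 2 + Im (inversion z2) ^ 2).
Proof.
  intros hy1 hy2; rewrite !twopi_over_Lsq_inversion, !inv_Lsq_sqr by assumption.
  intros h; apply (Rabs_scaled_sub_le (4 * PI)); [pose proof PI_RGT_0; lra|].
  eapply Rle_trans; [exact h|right; ring].
Qed.

Lemma Re_inversion_close (k : R) (z1 z2 : Cpx) : 0 < Im z1 -> 0 < Im z2 ->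
  Rabs (twopi_over_Asq z1 - twopi_over_Asq z2)
    <= k * (2 * PI) ^ 3 * (1 / Lsq z1 ^ 2 + 1 / Lsq z2 ^ 2) ->
  Rabs (Re (inversion z1) - Re (inversion z2))
    <= 2 * k * (2 * PI) ^ 2 * (Im (inversion z1) ^ 2 + Im (inversion z2) ^ 2).
Proof.
  intros hy1 hy2; rewrite !twopi_over_Asq_inversion, !inv_Lsq_sqr by assumption.
  intros h; apply (Rabs_scaled_sub_le (4 * PI)); [pose proof PI_RGT_0; lra|].
  eapply Rle_trans; [exact h|right; ring].
Qed.

(* From 3a <= 7b and 3b <= 7a, expanding (7b - 3a)(7a - 3b) >= 0. *)
Lemma sum_sq_le_of_close (a b : R) : 0 < a -> 0 < b -> Rabs (a - b) <= 2 / 5 * (a + b) ->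
  21 * (a ^ 2 + b ^ 2) <= 58 * (a * b).
Proof.
  unfold Rabs; destruct Rcase_abs; intros; nra.
Qed.

Lemma Cnorm_sub_lt_of_close (c : R) (w1 w2 : Cpx) :
  0 < c -> 0 < Im w1 -> 0 < Im w2 -> 80 * c * Im w1 <= 1 -> 80 * c * Im w2 <= 1 ->
  Rabs (Im w1 - Im w2) <= 32 * c * (Im w1 ^ 2 + Im w2 ^ 2) ->
  Rabs (Re w1 - Re w2) <= 40 * c * (Im w1 ^ 2 + Im w2 ^ 2) ->
  Cnorm (Csub w1 w2) < 560 * c * (Im w1 * Im w2).
Proof.
  set (a := Im w1); set (b := Im w2); intros hc ha hb hca hcb hIm hRe.
  assert (hsq : Cnorm (Csub w1 w2) <= 72 * c * (a ^ 2 + b ^ 2)).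
  { pose proof (Cnorm_le_abs_Re_Im (Csub w1 w2)) as hle.
    change (Re (Csub w1 w2)) with (Re w1 - Re w2) in hle.
    change (Im (Csub w1 w2)) with (a - b) in hle; lra. }
  assert (hclose : Rabs (a - b) <= 2 / 5 * (a + b)) by nra.
  pose proof (sum_sq_le_of_close a b ha hb hclose).
  assert (hab : 0 < c * (a * b)) by (apply Rmult_lt_0_compat; nra).
  nra.
Qed.

Lemma Cnorm_sub_lt_of_inversion (K : R) (z1 z2 : Cpx) :
  0 < Im z1 -> 0 < Im z2 -> 0 <= K ->
  Cnorm (Csub (inversion z1) (inversion z2))
    < K * (Im (inversion z1) * Im (inversion z2)) ->
  Cnorm (Csub z1 z2) < K * (Im z1 / Cnorm z1).
Proof.
  intros hy1 hy2 hK hw.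
  pose proof (Cnorm2_pos_of_Im z1 hy1) as hN1; pose proof (Cnorm2_pos_of_Im z2 hy2) as hN2.
  pose proof (Cnorm_mul_Im_inversion_le z2 hN2) as hz2.
  pose proof (Cnorm_pos z1 hN1); pose proof (Cnorm_pos z2 hN2).
  pose proof (Im_inversion_pos z1 hy1).
  rewrite Cnorm_sub_inversion, Im_div_Cnorm by assumption.
  apply Rlt_le_trans with (Cnorm z1 * Cnorm z2 * (K * (Im (inversion z1) * Im (inversion z2)))).
  - apply Rmult_lt_compat_l; [apply Rmult_lt_0_compat|]; assumption.
  - replace (Cnorm z1 * Cnorm z2 * (K * (Im (inversion z1) * Im (inversion z2))))
      with (K * (Cnorm z1 * Im (inversion z1)) * (Cnorm z2 * Im (inversion z2))) by ring.
    rewrite <- (Rmult_1_r (K * (Cnorm z1 * Im (inversion z1)))) at 2.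
    apply Rmult_le_compat_l; [|exact hz2].
    apply Rmult_le_pos; [assumption|]; apply Rmult_le_pos; lra.
Qed.

Theorem lemma6p2 (z1 z2 : Cpx) :
  0 < Im z1 -> 0 < Im z2 ->
  80 * (2 * PI) ^ 2 <= Cnorm z1 -> 80 * (2 * PI) ^ 2 <= Cnorm z2 ->
  Rabs (2 * PI / Lsq z1 - 2 * PI / Lsq z2)
    <= 16 * (2 * PI) ^ 3 * (1 / Lsq z1 ^ 2 + 1 / Lsq z2 ^ 2) ->
  Rabs (twopi_over_Asq z1 - twopi_over_Asq z2)
    <= 20 * (2 * PI) ^ 3 * (1 / Lsq z1 ^ 2 + 1 / Lsq z2 ^ 2) ->
  Cnorm (Csub z1 z2) < 560 * (2 * PI) ^ 2 * (Im z1 / Cnorm z1).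
Proof.
  intros hy1 hy2 hn1 hn2 hL hA.
  pose proof PI_RGT_0 as hpi; set (c := (2 * PI) ^ 2) in *.
  assert (hc : 0 < c) by (unfold c; nra).
  apply (Cnorm_sub_lt_of_inversion (560 * c)); [assumption|assumption|lra|].
  pose proof (Cnorm_mul_Im_inversion_le z1 (Cnorm2_pos_of_Im z1 hy1)) as hz1.
  pose proof (Cnorm_mul_Im_inversion_le z2 (Cnorm2_pos_of_Im z2 hy2)) as hz2.
  pose proof (Im_inversion_pos z1 hy1); pose proof (Im_inversion_pos z2 hy2).
  apply Cnorm_sub_lt_of_close; [assumption..|nra|nra| |].
  - replace 32 with (2 * 16) by ring; exact (Im_inversion_close 16 z1 z2 hy1 hy2 hL).
  - replace 40 with (2 * 20) by ring; exact (Re_inversion_close 20 z1 z2 hy1 hy2 hA).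
Qed.
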